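(* Let $\boldsymbol c\in(0,1)$ and $|y|<\boldsymbol c$. With $z_{ij}$ as defined below, $$|z_{ij}''(y)|\le3\max_{l=1,\dots,d}\frac{\big(m_l^{(2)}(\tfrac1{1-\boldsymbol c})\big)^2}{\big(m_l^{(0)}(1-\boldsymbol c)\big)^4}\qquad\text{for all }i,j.$$
   Context: For each $i$, $Q_{i,n}=\Phi^{-1}(P[X_{i,t}\le n])$ where $X_{i,t}$ is $\mathbb N_0$-valued and $\Phi$ is the standard normal CDF (summands with $Q=\pm\infty$ are $0$). $z_{ij}(y)=\big(\sum_{n_0,n_1\ge0}\exp(-\tfrac12(Q_{i,n_0}^2+Q_{j,n_1}^2-2yQ_{i,n_0}Q_{j,n_1}))\big)^{-1}$ for $y\in(-1,1)$, and $m_i^{(k)}(u)=\frac1{\sqrt{2\pi}}\sum_{n\ge0}e^{-Q_{i,n}^2/(2u)}|Q_{i,n}|^k$, assumed finite for the arguments used, with $m_i^{(0)}(1-\boldsymbol c)>0$. *)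

From Stdlib Require Import Reals List ClassicalEpsilon.
From Coquelicot Require Import Coquelicot.
Open Scope R_scope.

(* standard normal density and CDF:  Phi x = 1/2 + int_0^x phi  (= int_{-oo}^x phi) *)
Definition std_normal_pdf (x : R) : R := exp (- (x ^ 2) / 2) / sqrt (2 * PI).
Definition Phi (x : R) : R := / 2 + RInt std_normal_pdf 0 x.

Definition Phi_inv (p : R) : Rbar :=
  if Rle_dec p 0 then m_infty
  else if Rle_dec 1 p then p_infty
  else Finite (epsilon (inhabits 0) (fun x => Phi x = p)).

(* The marginal law of X_{i,t} (N_0-valued) is given by its pmf  pmf i : nat -> R;
   its CDF is  P[X_{i,t} <= n] = sum_{k=0}^n pmf i k. *)
Definition cdf (pmf : nat -> nat -> R) (i n : nat) : R := sum_f_R0 (pmf i) n.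

Definition is_pmf (q : nat -> R) : Prop := (forall n, 0 <= q n) /\ is_series q 1.

Definition Q (pmf : nat -> nat -> R) (i n : nat) : Rbar := Phi_inv (cdf pmf i n).

Definition z_term (pmf : nat -> nat -> R) (i j : nat) (y : R) (n0 n1 : nat) : R :=
  match Q pmf i n0, Q pmf j n1 with
  | Finite a, Finite b => exp (- (1 / 2) * (a ^ 2 + b ^ 2 - 2 * y * a * b))
  | _, _ => 0
  end.

Definition z (pmf : nat -> nat -> R) (i j : nat) (y : R) : R :=
  / Series (fun n0 => Series (fun n1 => z_term pmf i j y n0 n1)).

Definition m_term (pmf : nat -> nat -> R) (i k : nat) (u : R) (n : nat) : R :=
  match Q pmf i n with
  | Finite q => exp (- (q ^ 2) / (2 * u)) * (Rabs q) ^ k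
  | _ => 0
  end.

Definition m (pmf : nat -> nat -> R) (i k : nat) (u : R) : R :=
  / sqrt (2 * PI) * Series (m_term pmf i k u).

(* max_{l = 0..d-1} f l  (all values used are >= 0, d >= 1 in the theorem) *)
Definition max_over (d : nat) (f : nat -> R) : R :=
  fold_right Rmax 0 (map f (seq 0 d)).

From Stdlib Require Import Reals List Lra Lia Psatz.
From Coquelicot Require Import Coquelicot.
Open Scope R_scope.

(* Write [S_k(y)] for the double series of [(Q_{i,n0} Q_{j,n1})^k] times the kernel
   [exp (-(Q_{i,n0}^2 + Q_{j,n1}^2 - 2 y Q_{i,n0} Q_{j,n1}) / 2)], so that [z_{ij} = 1 / S_0].
   For [|y| < r < 1] every summand with [k <= 4] is dominated by a product of Gaussian tails
   [(1 + a^4) exp (-(1 - r) a^2 / 2)], which are summable by the moment hypotheses; this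
   justifies termwise differentiation, [S_k' = S_(k+1)], hence
   [z'' = (2 S_1^2 - S_0 S_2) / S_0^3].  Cauchy-Schwarz gives [S_1^2 <= S_0 S_2], so
   [|z''| <= 3 S_2 / S_0^2], and for [|y| < c] the kernel lies between the product weights
   defining the moments: [S_0 >= 2 pi m_i^(0)(1-c) m_j^(0)(1-c)] and
   [S_2 <= 2 pi m_i^(2)(1/(1-c)) m_j^(2)(1/(1-c))]; the factor [2 pi >= 1] is then dropped. *)

Lemma Series_nonneg (a : nat -> R) : (forall n, 0 <= a n) -> ex_series a -> 0 <= Series a.
Proof.
  intros Ha Hex.
  rewrite <- (Rmult_0_l (Series a)), <- Series_scal_l.
  apply Series_le; [|exact Hex].
  intros n; specialize (Ha n); lra.
Qed.

Lemma Series_le_general (a b : nat -> R) :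
  (forall n, a n <= b n) -> ex_series a -> ex_series b -> Series a <= Series b.
Proof.
  intros Hab Ha Hb.
  assert (H : 0 <= Series (fun n => b n - a n)).
  { apply Series_nonneg; [intros n; specialize (Hab n); lra|].
    apply (ex_series_minus b a); assumption. }
  rewrite Series_minus in H by assumption. lra.
Qed.

Lemma Series_abs_le (a b : nat -> R) :
  (forall n, Rabs (a n) <= b n) -> ex_series b -> Rabs (Series a) <= Series b.
Proof.
  intros Hab Hb.
  assert (Habs : ex_series (fun n => Rabs (a n))).
  { apply (ex_series_le (fun n => Rabs (a n)) b); [|exact Hb].
    intros n. change (norm (Rabs (a n))) with (Rabs (Rabs (a n))).
    rewrite Rabs_Rabsolu. apply Hab. }
  eapply Rle_trans; [apply Series_Rabs, Habs|].
  apply Series_le; [|exact Hb]. intros n; split; [apply Rabs_pos | apply Hab].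
Qed.

Lemma Series_remainder_le (f0 f1 g M : nat -> R) (h : R) :
  ex_series f0 -> ex_series f1 -> ex_series g -> ex_series M ->
  (forall n, Rabs (f1 n - f0 n - h * g n) <= h ^ 2 * M n) ->
  Rabs (Series f1 - Series f0 - h * Series g) <= h ^ 2 * Series M.
Proof.
  intros H0 H1 Hg HM Hb.
  assert (Hhg : ex_series (fun n => h * g n)) by (apply (ex_series_scal_l h g); exact Hg).
  assert (Hdiff : ex_series (fun n => f1 n - f0 n)) by (apply (ex_series_minus f1 f0); assumption).
  rewrite <- Series_scal_l, <- Series_minus, <- Series_minus by assumption.
  rewrite <- Series_scal_l. apply Series_abs_le; [exact Hb|].
  apply (ex_series_scal_l (h ^ 2) M); exact HM.
Qed.

Lemma is_derive_Series (f f' : nat -> R -> R) (M : nat -> R) (y delta : R) :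
  0 < delta -> ex_series M ->
  (forall h, Rabs h < delta -> ex_series (fun n => f n (y + h))) ->
  ex_series (fun n => f' n y) ->
  (forall n h, Rabs h < delta -> Rabs (f n (y + h) - f n y - h * f' n y) <= h ^ 2 * M n) ->
  is_derive (fun x => Series (fun n => f n x)) y (Series (fun n => f' n y)).
Proof.
  intros Hdelta HM Hf Hf' Hrem. apply is_derive_Reals. intros eps Heps.
  set (SM := Rabs (Series M)).
  assert (Hpos : 0 < Rmin delta (eps / (SM + 1))).
  { apply Rmin_pos; [exact Hdelta|]. apply Rdiv_lt_0_compat; unfold SM; [lra|].
    pose proof (Rabs_pos (Series M)); lra. }
  exists (mkposreal _ Hpos). intros h Hh0 Hh. simpl in Hh.
  assert (Hhd : Rabs h < delta) by (eapply Rlt_le_trans; [exact Hh | apply Rmin_l]).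
  assert (Hhe : Rabs h * (SM + 1) < eps).
  { assert (Rabs h < eps / (SM + 1)) by (eapply Rlt_le_trans; [exact Hh | apply Rmin_r]).
    assert (0 <= SM) by apply Rabs_pos.
    apply (Rmult_lt_reg_r (/ (SM + 1))); [apply Rinv_0_lt_compat; lra|].
    rewrite Rmult_assoc, Rinv_r by lra. lra. }
  assert (Hf0 : ex_series (fun n => f n y)).
  { assert (K := Hf 0 ltac:(rewrite Rabs_R0; exact Hdelta)).
    eapply ex_series_ext; [|exact K]. intros n; simpl. now rewrite Rplus_0_r. }
  pose proof (Series_remainder_le _ _ _ M h Hf0 (Hf h Hhd) Hf' HM (fun n => Hrem n h Hhd)) as R.
  assert (Hah : 0 < Rabs h) by (apply Rabs_pos_lt; exact Hh0).
  replace ((Series (fun n => f n (y + h)) - Series (fun n => f n y)) / h - Series (fun n => f' n y))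
    with ((Series (fun n => f n (y + h)) - Series (fun n => f n y)
           - h * Series (fun n => f' n y)) / h)
    by (field; exact Hh0).
  unfold Rdiv. rewrite Rabs_mult, Rabs_inv.
  apply (Rmult_lt_reg_r (Rabs h)); [exact Hah|].
  rewrite Rmult_assoc, Rinv_l, Rmult_1_r by lra.
  eapply Rle_lt_trans; [exact R|].
  assert (h ^ 2 * Series M <= h ^ 2 * SM)
    by (apply Rmult_le_compat_l; [apply pow2_ge_0 | apply Rle_abs]).
  assert (h ^ 2 = Rabs h * Rabs h) by (rewrite <- pow2_abs; ring).
  assert (0 <= SM) by apply Rabs_pos. nra.
Qed.

Definition Series2 (F : nat -> nat -> R) : R := Series (fun n0 => Series (F n0)).

Definition ex_series2 (F : nat -> nat -> R) : Prop :=
  (forall n0, ex_series (F n0)) /\ ex_series (fun n0 => Series (F n0)).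

Lemma ex_series2_dominated (F : nat -> nat -> R) (u v : nat -> R) :
  (forall n0 n1, Rabs (F n0 n1) <= u n0 * v n1) -> (forall n, 0 <= u n) ->
  ex_series u -> ex_series v ->
  ex_series2 F /\ (forall n0, Rabs (Series (F n0)) <= u n0 * Series v).
Proof.
  intros HF Hu Eu Ev.
  assert (Hrow : forall n0, ex_series (fun n1 => u n0 * v n1))
    by (intros n0; apply (ex_series_scal_l (u n0) v); exact Ev).
  assert (Hbound : forall n0, Rabs (Series (F n0)) <= u n0 * Series v).
  { intros n0. rewrite <- Series_scal_l. apply Series_abs_le; [apply HF | apply Hrow]. }
  split; [split|]; [| | exact Hbound].
  - intros n0. apply (ex_series_le (F n0) (fun n1 => u n0 * v n1)); [apply HF | apply Hrow].
  - apply (ex_series_le (fun n0 => Series (F n0)) (fun n0 => u n0 * Series v)); [exact Hbound|].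
    apply (ex_series_scal_r (Series v) u); exact Eu.
Qed.

Lemma Series2_le (F G : nat -> nat -> R) :
  (forall n0 n1, F n0 n1 <= G n0 n1) -> ex_series2 F -> ex_series2 G -> Series2 F <= Series2 G.
Proof.
  intros H [F1 F2] [G1 G2]. apply Series_le_general; [|exact F2|exact G2].
  intros n0. apply Series_le_general; [apply H | apply F1 | apply G1].
Qed.

Lemma Series2_nonneg (F : nat -> nat -> R) :
  (forall n0 n1, 0 <= F n0 n1) -> ex_series2 F -> 0 <= Series2 F.
Proof.
  intros H [F1 F2]. apply Series_nonneg; [|exact F2].
  intros n0. apply Series_nonneg; [apply H | apply F1].
Qed.

Lemma ex_series_lin (a b : nat -> R) (al be : R) :
  ex_series a -> ex_series b -> ex_series (fun n => al * a n + be * b n).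
Proof.
  intros Ha Hb. apply (ex_series_plus (fun n => al * a n) (fun n => be * b n)).
  - apply (ex_series_scal_l al a); exact Ha.
  - apply (ex_series_scal_l be b); exact Hb.
Qed.

Lemma Series_lin (a b : nat -> R) (al be : R) :
  ex_series a -> ex_series b ->
  Series (fun n => al * a n + be * b n) = al * Series a + be * Series b.
Proof.
  intros Ha Hb. rewrite Series_plus, !Series_scal_l; [reflexivity | |].
  - apply (ex_series_scal_l al a); exact Ha.
  - apply (ex_series_scal_l be b); exact Hb.
Qed.

Lemma ex_series2_lin (F G : nat -> nat -> R) (al be : R) :
  ex_series2 F -> ex_series2 G -> ex_series2 (fun n0 n1 => al * F n0 n1 + be * G n0 n1).
Proof.
  intros [F1 F2] [G1 G2]. split.
  - intros n0. apply ex_series_lin; [apply F1 | apply G1].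
  - apply (ex_series_ext (fun n0 => al * Series (F n0) + be * Series (G n0))).
    + intros n0. symmetry. apply Series_lin; [apply F1 | apply G1].
    + apply ex_series_lin; assumption.
Qed.

Lemma Series2_lin (F G : nat -> nat -> R) (al be : R) :
  ex_series2 F -> ex_series2 G ->
  Series2 (fun n0 n1 => al * F n0 n1 + be * G n0 n1) = al * Series2 F + be * Series2 G.
Proof.
  intros [F1 F2] [G1 G2]. unfold Series2.
  rewrite (Series_ext _ (fun n0 => al * Series (F n0) + be * Series (G n0)))
    by (intros n0; apply Series_lin; [apply F1 | apply G1]).
  apply Series_lin; assumption.
Qed.

Lemma Series2_mul (p q : nat -> R) : Series2 (fun n0 n1 => p n0 * q n1) = Series p * Series q.
Proof.
  unfold Series2. rewrite <- Series_scal_r. apply Series_ext. intros n0. apply Series_scal_l.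
Qed.

Lemma exp_le_compat (x y : R) : x <= y -> exp x <= exp y.
Proof. intros [H|H]; [left; apply exp_increasing, H | right; rewrite H; reflexivity]. Qed.

Lemma exp_le_1 (x : R) : x <= 0 -> exp x <= 1.
Proof. intros H. rewrite <- exp_0. apply exp_le_compat, H. Qed.

Lemma exp_ge_1 (x : R) : 0 <= x -> 1 <= exp x.
Proof. intros H. pose proof (exp_ineq1_le x). lra. Qed.

Lemma exp_mul_exp_opp (x : R) : exp x * exp (- x) = 1.
Proof. rewrite <- exp_plus, Rplus_opp_r. apply exp_0. Qed.

Lemma mul_exp_opp_le_1 (x : R) : x * exp (- x) <= 1.
Proof.
  pose proof (exp_ineq1_le x). pose proof (exp_pos (- x)). pose proof (exp_mul_exp_opp x). nra.
Qed.

Lemma Rabs_exp_sub_taylor1_le (v : R) : Rabs (exp v - 1 - v) <= v ^ 2 * exp (Rabs v).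
Proof.
  pose proof (exp_ineq1_le v) as Hv. pose proof (exp_ineq1_le (- v)) as Hnv.
  pose proof (exp_mul_exp_opp v). pose proof (exp_pos v).
  assert (Hup : exp v - 1 <= v * exp v) by nra.
  rewrite Rabs_pos_eq by lra.
  destruct (Rle_dec 0 v).
  - rewrite Rabs_pos_eq by lra. nra.
  - rewrite Rabs_left by lra. nra.
Qed.

Lemma pow_le_1_plus_pow4 (m : nat) (x : R) : (m <= 4)%nat -> 0 <= x -> x ^ m <= 1 + x ^ 4.
Proof.
  intros Hm Hx. pose proof (pow_le x 4 Hx).
  destruct (Rle_dec x 1).
  - pose proof (pow_incr x 1 m (conj Hx r)). rewrite pow1 in *. lra.
  - pose proof (Rle_pow x m 4 ltac:(lra) Hm). lra.
Qed.

Lemma Rabs_mul_pow_le (a b : R) (k : nat) : (k <= 4)%nat ->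
  Rabs ((a * b) ^ k) <= (1 + a ^ 4) * (1 + b ^ 4).
Proof.
  intros Hk. rewrite <- RPow_abs, Rabs_mult, Rpow_mult_distr.
  assert (Habs4 : forall x, Rabs x ^ 4 = x ^ 4)
    by (intros x; change 4%nat with (2 * 2)%nat; rewrite !pow_mult, pow2_abs; reflexivity).
  pose proof (pow_le_1_plus_pow4 k (Rabs a) Hk (Rabs_pos a)).
  pose proof (pow_le_1_plus_pow4 k (Rabs b) Hk (Rabs_pos b)).
  rewrite Habs4 in *.
  apply Rmult_le_compat; try (apply pow_le, Rabs_pos); assumption.
Qed.

Lemma two_Rabs_mul_le (a b : R) : 2 * Rabs (a * b) <= a ^ 2 + b ^ 2.
Proof.
  rewrite Rabs_mult, <- (pow2_abs a), <- (pow2_abs b).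
  pose proof (pow2_ge_0 (Rabs a - Rabs b)). lra.
Qed.

(* The summand of [z]: a bivariate normal kernel with correlation [y], lacking the factor
   [1 / (1 - y^2)] in the exponent. *)
Definition bvn_kernel (y a b : R) : R := exp (- (1 / 2) * (a ^ 2 + b ^ 2 - 2 * y * a * b)).

Lemma bvn_kernel_shift (y h a b : R) :
  bvn_kernel (y + h) a b = bvn_kernel y a b * exp (h * (a * b)).
Proof. unfold bvn_kernel. rewrite <- exp_plus. f_equal. field. Qed.

Lemma bvn_kernel_le (y t r a b : R) : Rabs y + t <= r -> 0 <= t ->
  bvn_kernel y a b * exp (t * Rabs (a * b))
  <= exp (- (1 - r) * a ^ 2 / 2) * exp (- (1 - r) * b ^ 2 / 2).
Proof.
  intros Hr Ht. unfold bvn_kernel. rewrite <- !exp_plus. apply exp_le_compat.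
  assert (Hyab : y * (a * b) <= Rabs y * Rabs (a * b))
    by (rewrite <- Rabs_mult; apply Rle_abs).
  pose proof (two_Rabs_mul_le a b).
  pose proof (Rabs_pos (a * b)). pose proof (Rabs_pos y). nra.
Qed.

Lemma bvn_kernel_ge (y c a b : R) : Rabs y <= c < 1 ->
  exp (- a ^ 2 / (2 * (1 - c))) * exp (- b ^ 2 / (2 * (1 - c))) <= bvn_kernel y a b.
Proof.
  intros [Hy Hc]. unfold bvn_kernel. rewrite <- exp_plus. apply exp_le_compat.
  set (s := a ^ 2 + b ^ 2).
  assert (Hs : 0 <= s) by (unfold s; pose proof (pow2_ge_0 a); pose proof (pow2_ge_0 b); lra).
  assert (Hyab : - (y * (a * b)) <= c * (s / 2)).
  { eapply Rle_trans; [apply Rle_abs|]. rewrite Rabs_Ropp, Rabs_mult.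
    pose proof (two_Rabs_mul_le a b). pose proof (Rabs_pos (a * b)). pose proof (Rabs_pos y).
    unfold s. nra. }
  assert (Hcs : c * s <= c / (1 - c) * s).
  { apply Rmult_le_compat_r; [exact Hs|]. unfold Rdiv.
    pose proof (Rabs_pos y).
    assert (1 <= / (1 - c)) by (rewrite <- Rinv_1; apply Rinv_le_contravar; lra). nra. }
  replace (- a ^ 2 / (2 * (1 - c)) + - b ^ 2 / (2 * (1 - c))) with (- s / 2 - c / (1 - c) * s / 2)
    by (unfold s; field; lra).
  lra.
Qed.

(* Stated with the summands of [m_i^(0)(1-c)] and [m_i^(2)(1/(1-c))] on the right. *)
Lemma gauss_tail_le (a c r : R) : 0 < c < 1 -> 0 <= r < c ->
  (1 + a ^ 4) * exp (- (1 - r) * a ^ 2 / 2)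
  <= exp (1 / (2 * (1 - c))) * (exp (- a ^ 2 / (2 * (1 - c))) * Rabs a ^ 0)
     + (1 + 2 / (c - r)) * (exp (- a ^ 2 / (2 * / (1 - c))) * Rabs a ^ 2).
Proof.
  intros Hc Hr.
  rewrite pow2_abs, pow_O, Rmult_1_r.
  replace (- a ^ 2 / (2 * / (1 - c))) with (- (1 - c) * a ^ 2 / 2) by (field; lra).
  replace (a ^ 4) with (a ^ 2 * a ^ 2) by ring.
  set (t := a ^ 2). assert (Ht : 0 <= t) by apply pow2_ge_0.
  set (E := exp (- (1 - c) * t / 2)). assert (HE : 0 < E) by apply exp_pos.
  assert (Hlow : exp (- (1 - r) * t / 2)
                 <= exp (1 / (2 * (1 - c))) * exp (- t / (2 * (1 - c))) + t * E).
  { destruct (Rle_dec t 1).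
    - assert (exp (- (1 - r) * t / 2) <= 1).
      { apply exp_le_1.
        assert (0 <= (1 - r) * t) by (apply Rmult_le_pos; lra). lra. }
      assert (1 <= exp (1 / (2 * (1 - c))) * exp (- t / (2 * (1 - c)))).
      { rewrite <- exp_plus. apply exp_ge_1.
        replace (1 / (2 * (1 - c)) + - t / (2 * (1 - c))) with ((1 - t) / (2 * (1 - c)))
          by (field; lra).
        apply Rdiv_le_0_compat; lra. }
      nra.
    - assert (exp (- (1 - r) * t / 2) <= E).
      { apply exp_le_compat. assert (0 <= (c - r) * t) by (apply Rmult_le_pos; lra). lra. }
      pose proof (exp_pos (1 / (2 * (1 - c)))). pose proof (exp_pos (- t / (2 * (1 - c)))). nra. }
  assert (Hhigh : t * t * exp (- (1 - r) * t / 2) <= 2 / (c - r) * (E * t)).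
  (* the extra factor [t] is absorbed by the gap [c - r] between the two Gaussian rates *)
  { set (x := (c - r) * t / 2).
    replace (exp (- (1 - r) * t / 2)) with (E * exp (- x))
      by (unfold E, x; rewrite <- exp_plus; f_equal; field).
    replace (t * t * (E * exp (- x))) with (2 / (c - r) * (E * t) * (x * exp (- x)))
      by (unfold x; field; lra).
    pose proof (mul_exp_opp_le_1 x).
    assert (0 <= 2 / (c - r) * (E * t)) by (apply Rmult_le_pos; [apply Rdiv_le_0_compat|]; nra).
    nra. }
  nra.
Qed.

Definition moment_term (pmf : nat -> nat -> R) (i j k : nat) (y : R) (n0 n1 : nat) : R :=
  match Q pmf i n0, Q pmf j n1 with
  | Finite a, Finite b => (a * b) ^ k * bvn_kernel y a b
  | _, _ => 0
  end.

Definition moment_sum (pmf : nat -> nat -> R) (i j k : nat) (y : R) : R :=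
  Series2 (moment_term pmf i j k y).

Definition gauss_tail (pmf : nat -> nat -> R) (i : nat) (r : R) (n : nat) : R :=
  match Q pmf i n with
  | Finite a => (1 + a ^ 4) * exp (- (1 - r) * a ^ 2 / 2)
  | _ => 0
  end.

Lemma z_eq_inv_moment_sum0 (pmf : nat -> nat -> R) (i j : nat) (y : R) :
  z pmf i j y = / moment_sum pmf i j 0 y.
Proof.
  unfold z, moment_sum, Series2. f_equal.
  apply Series_ext; intros n0. apply Series_ext; intros n1.
  unfold z_term, moment_term, bvn_kernel.
  destruct (Q pmf i n0), (Q pmf j n1); simpl; ring.
Qed.

Lemma m_term_nonneg (pmf : nat -> nat -> R) (i k : nat) (u : R) (n : nat) :
  0 <= m_term pmf i k u n.
Proof.
  unfold m_term. destruct (Q pmf i n); try lra.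
  apply Rmult_le_pos; [left; apply exp_pos | apply pow_le, Rabs_pos].
Qed.

Lemma Series_m_term (pmf : nat -> nat -> R) (i k : nat) (u : R) :
  Series (m_term pmf i k u) = sqrt (2 * PI) * m pmf i k u.
Proof.
  unfold m. pose proof PI_RGT_0. assert (0 < sqrt (2 * PI)) by (apply sqrt_lt_R0; lra).
  field. lra.
Qed.

Lemma Series_m_term_mul (pmf : nat -> nat -> R) (i j k l : nat) (u v : R) :
  Series (m_term pmf i k u) * Series (m_term pmf j l v) = 2 * PI * (m pmf i k u * m pmf j l v).
Proof.
  rewrite !Series_m_term. pose proof PI_RGT_0.
  rewrite <- (sqrt_sqrt (2 * PI)) at 3 by lra. ring.
Qed.

Lemma m_nonneg (pmf : nat -> nat -> R) (i k : nat) (u : R) :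
  ex_series (m_term pmf i k u) -> 0 <= m pmf i k u.
Proof.
  intros Hex. pose proof PI_RGT_0. unfold m. apply Rmult_le_pos.
  - left. apply Rinv_0_lt_compat, sqrt_lt_R0. lra.
  - apply Series_nonneg; [apply m_term_nonneg | exact Hex].
Qed.

Lemma gauss_tail_nonneg (pmf : nat -> nat -> R) (i : nat) (r : R) (n : nat) :
  0 <= gauss_tail pmf i r n.
Proof.
  unfold gauss_tail. destruct (Q pmf i n); try lra.
  apply Rmult_le_pos; [|left; apply exp_pos].
  pose proof (pow2_ge_0 (r0 ^ 2)). rewrite <- pow_mult in *. simpl in *. lra.
Qed.

Lemma ex_series_gauss_tail (pmf : nat -> nat -> R) (i : nat) (c r : R) :
  0 < c < 1 -> 0 <= r < c ->
  ex_series (m_term pmf i 2 (/ (1 - c))) -> ex_series (m_term pmf i 0 (1 - c)) ->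
  ex_series (gauss_tail pmf i r).
Proof.
  intros Hc Hr H2 H0.
  apply (ex_series_le (gauss_tail pmf i r)
    (fun n => exp (1 / (2 * (1 - c))) * m_term pmf i 0 (1 - c) n
              + (1 + 2 / (c - r)) * m_term pmf i 2 (/ (1 - c)) n)).
  - intros n. change (norm (gauss_tail pmf i r n)) with (Rabs (gauss_tail pmf i r n)).
    rewrite Rabs_pos_eq by apply gauss_tail_nonneg.
    unfold gauss_tail, m_term.
    destruct (Q pmf i n) as [a| |]; [apply gauss_tail_le; assumption | lra ..].
  - apply ex_series_lin; assumption.
Qed.

Lemma moment_term_bound (pmf : nat -> nat -> R) (i j k : nat) (y r : R) (n0 n1 : nat) :
  (k <= 4)%nat -> Rabs y <= r ->
  Rabs (moment_term pmf i j k y n0 n1) <= gauss_tail pmf i r n0 * gauss_tail pmf j r n1.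
Proof.
  intros Hk Hy. unfold moment_term, gauss_tail.
  destruct (Q pmf i n0) as [a| |], (Q pmf j n1) as [b| |];
    rewrite ?Rabs_R0, ?Rmult_0_l, ?Rmult_0_r; try lra.
  rewrite Rabs_mult, (Rabs_pos_eq (bvn_kernel y a b)) by (left; apply exp_pos).
  pose proof (bvn_kernel_le y 0 r a b ltac:(lra) ltac:(lra)) as K.
  rewrite Rmult_0_l, exp_0, Rmult_1_r in K.
  replace ((1 + a ^ 4) * exp (- (1 - r) * a ^ 2 / 2) * ((1 + b ^ 4) * exp (- (1 - r) * b ^ 2 / 2)))
    with ((1 + a ^ 4) * (1 + b ^ 4) * (exp (- (1 - r) * a ^ 2 / 2) * exp (- (1 - r) * b ^ 2 / 2)))
    by ring.
  apply Rmult_le_compat;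
    [apply Rabs_pos | left; apply exp_pos | apply Rabs_mul_pow_le, Hk | exact K].
Qed.

Lemma moment_term_remainder (pmf : nat -> nat -> R) (i j k : nat) (y h r : R) (n0 n1 : nat) :
  (k <= 2)%nat -> Rabs y + Rabs h <= r ->
  Rabs (moment_term pmf i j k (y + h) n0 n1 - moment_term pmf i j k y n0 n1
        - h * moment_term pmf i j (S k) y n0 n1)
  <= h ^ 2 * (gauss_tail pmf i r n0 * gauss_tail pmf j r n1).
Proof.
  intros Hk Hr. unfold moment_term, gauss_tail.
  destruct (Q pmf i n0) as [a| |], (Q pmf j n1) as [b| |];
    rewrite ?Rmult_0_r, ?Rmult_0_l, ?Rminus_0_r, ?Rabs_R0; try lra.
  rewrite bvn_kernel_shift.
  set (e := bvn_kernel y a b). set (p := a * b).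
  assert (He : 0 < e) by apply exp_pos.
  replace (p ^ k * (e * exp (h * p)) - p ^ k * e - h * (p ^ S k * e))
    with (p ^ k * e * (exp (h * p) - 1 - h * p)) by (simpl; ring).
  pose proof (Rabs_exp_sub_taylor1_le (h * p)) as T.
  pose proof (bvn_kernel_le y (Rabs h) r a b ltac:(lra) (Rabs_pos h)) as K. fold e p in K.
  pose proof (Rabs_mul_pow_le a b (k + 2) ltac:(lia)) as P. fold p in P.
  rewrite pow_add, Rabs_mult, (Rabs_pos_eq (p ^ 2)) in P by apply pow2_ge_0.
  rewrite Rabs_mult in T |- *. rewrite (Rabs_mult (p ^ k)), (Rabs_pos_eq e) by lra.
  apply Rle_trans with (Rabs (p ^ k) * e * ((h * p) ^ 2 * exp (Rabs h * Rabs p))).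
  { apply Rmult_le_compat_l; [apply Rmult_le_pos; [apply Rabs_pos | lra] | exact T]. }
  replace (Rabs (p ^ k) * e * ((h * p) ^ 2 * exp (Rabs h * Rabs p)))
    with (h ^ 2 * ((Rabs (p ^ k) * p ^ 2) * (e * exp (Rabs h * Rabs p)))) by ring.
  apply Rmult_le_compat_l; [apply pow2_ge_0|].
  replace ((1 + a ^ 4) * exp (- (1 - r) * a ^ 2 / 2) * ((1 + b ^ 4) * exp (- (1 - r) * b ^ 2 / 2)))
    with ((1 + a ^ 4) * (1 + b ^ 4) * (exp (- (1 - r) * a ^ 2 / 2) * exp (- (1 - r) * b ^ 2 / 2)))
    by ring.
  apply Rmult_le_compat;
    [apply Rmult_le_pos; [apply Rabs_pos | apply pow2_ge_0] | | exact P | exact K].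
  left. apply Rmult_lt_0_compat; [exact He | apply exp_pos].
Qed.

Lemma discriminant_le (s0 s1 s2 : R) :
  0 < s0 -> (forall t, 0 <= t ^ 2 * s0 - 2 * t * s1 + s2) -> s1 ^ 2 <= s0 * s2.
Proof.
  intros H0 Hq. specialize (Hq (s1 / s0)).
  replace ((s1 / s0) ^ 2 * s0 - 2 * (s1 / s0) * s1 + s2) with ((s0 * s2 - s1 ^ 2) / s0) in Hq
    by (field; lra).
  apply Rmult_le_compat_r with (r := s0) in Hq; [|lra].
  unfold Rdiv in Hq. rewrite Rmult_0_l, Rmult_assoc, Rinv_l, Rmult_1_r in Hq by lra. lra.
Qed.

Section MomentSums.

Variables (pmf : nat -> nat -> R) (i j : nat) (c : R).
Hypothesis Hc : 0 < c < 1.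
Hypotheses (Hi2 : ex_series (m_term pmf i 2 (/ (1 - c))))
  (Hi0 : ex_series (m_term pmf i 0 (1 - c)))
  (Hj2 : ex_series (m_term pmf j 2 (/ (1 - c))))
  (Hj0 : ex_series (m_term pmf j 0 (1 - c)))
  (Hmi : 0 < m pmf i 0 (1 - c))
  (Hmj : 0 < m pmf j 0 (1 - c)).

Let mom k := moment_sum pmf i j k.

Lemma ex_series2_moment_term_at (k : nat) (x r : R) : (k <= 4)%nat -> Rabs x <= r < c ->
  ex_series2 (moment_term pmf i j k x) /\
  (forall n0, Rabs (Series (moment_term pmf i j k x n0))
              <= gauss_tail pmf i r n0 * Series (gauss_tail pmf j r)).
Proof.
  intros Hk [Hx Hr]. pose proof (Rabs_pos x).
  apply ex_series2_dominated.
  - intros n0 n1. apply moment_term_bound; assumption.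
  - apply gauss_tail_nonneg.
  - apply (ex_series_gauss_tail _ _ c); auto; lra.
  - apply (ex_series_gauss_tail _ _ c); auto; lra.
Qed.

Lemma ex_series2_moment_term (k : nat) (x : R) : (k <= 4)%nat -> Rabs x < c ->
  ex_series2 (moment_term pmf i j k x).
Proof.
  intros Hk Hx. apply (ex_series2_moment_term_at k x ((Rabs x + c) / 2)); [exact Hk | lra].
Qed.

Lemma is_derive_moment_sum (k : nat) (y : R) : (k <= 2)%nat -> Rabs y < c ->
  is_derive (mom k) y (mom (S k) y).
Proof.
  intros Hk Hy.
  set (r := (Rabs y + c) / 2). pose proof (Rabs_pos y).
  assert (Hy' : Rabs y <= r < c) by (unfold r; lra).
  assert (Hyh : forall h, Rabs h < r - Rabs y -> Rabs (y + h) <= r < c)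
    by (intros h Hh; pose proof (Rabs_triang y h); lra).
  assert (Ti : ex_series (gauss_tail pmf i r)) by (apply (ex_series_gauss_tail _ _ c); auto; lra).
  assert (Tj : ex_series (gauss_tail pmf j r)) by (apply (ex_series_gauss_tail _ _ c); auto; lra).
  unfold mom, moment_sum, Series2.
  apply (is_derive_Series (fun n0 x => Series (moment_term pmf i j k x n0))
           (fun n0 x => Series (moment_term pmf i j (S k) x n0))
           (fun n0 => gauss_tail pmf i r n0 * Series (gauss_tail pmf j r)) y (r - Rabs y)).
  - unfold r; lra.
  - apply (ex_series_scal_r (Series (gauss_tail pmf j r)) (gauss_tail pmf i r)); exact Ti.
  - intros h Hh. apply (ex_series2_moment_term_at k (y + h) r); [lia | auto].
  - apply (ex_series2_moment_term_at (S k) y r); [lia | auto].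
  - intros n0 h Hh.
    rewrite <- (Series_scal_l (gauss_tail pmf i r n0)). apply Series_remainder_le.
    + apply (ex_series2_moment_term_at k y r); [lia | auto].
    + apply (ex_series2_moment_term_at k (y + h) r); [lia | auto].
    + apply (ex_series2_moment_term_at (S k) y r); [lia | auto].
    + apply (ex_series_scal_l (gauss_tail pmf i r n0) (gauss_tail pmf j r)); exact Tj.
    + intros n1. apply moment_term_remainder; [exact Hk | lra].
Qed.

Lemma moment_sum0_ge (x : R) : Rabs x < c ->
  2 * PI * (m pmf i 0 (1 - c) * m pmf j 0 (1 - c)) <= mom 0 x.
Proof.
  intros Hx.
  rewrite <- Series_m_term_mul, <- Series2_mul. apply Series2_le.
  - intros n0 n1. unfold m_term, moment_term.
    destruct (Q pmf i n0) as [a| |], (Q pmf j n1) as [b| |];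
      rewrite ?Rmult_0_l, ?Rmult_0_r; try lra.
    rewrite !pow_O, !Rmult_1_r, Rmult_1_l. apply bvn_kernel_ge. lra.
  - apply (ex_series2_dominated _ (m_term pmf i 0 (1 - c)) (m_term pmf j 0 (1 - c))); auto.
    + intros n0 n1. rewrite Rabs_pos_eq; [lra|]. apply Rmult_le_pos; apply m_term_nonneg.
    + apply m_term_nonneg.
  - apply ex_series2_moment_term; [lia | exact Hx].
Qed.

Lemma moment_sum2_le (x : R) : Rabs x < c ->
  mom 2 x <= 2 * PI * (m pmf i 2 (/ (1 - c)) * m pmf j 2 (/ (1 - c))).
Proof.
  intros Hx.
  rewrite <- Series_m_term_mul, <- Series2_mul. apply Series2_le.
  - intros n0 n1. unfold m_term, moment_term.
    destruct (Q pmf i n0) as [a| |], (Q pmf j n1) as [b| |];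
      rewrite ?Rmult_0_l, ?Rmult_0_r; try lra.
    rewrite !pow2_abs.
    replace (- a ^ 2 / (2 * / (1 - c))) with (- (1 - c) * a ^ 2 / 2) by (field; lra).
    replace (- b ^ 2 / (2 * / (1 - c))) with (- (1 - c) * b ^ 2 / 2) by (field; lra).
    pose proof (bvn_kernel_le x 0 c a b ltac:(lra) ltac:(lra)) as K.
    rewrite Rmult_0_l, exp_0, Rmult_1_r in K.
    replace (exp (- (1 - c) * a ^ 2 / 2) * a ^ 2 * (exp (- (1 - c) * b ^ 2 / 2) * b ^ 2))
      with ((a * b) ^ 2 * (exp (- (1 - c) * a ^ 2 / 2) * exp (- (1 - c) * b ^ 2 / 2))) by ring.
    apply Rmult_le_compat_l; [apply pow2_ge_0 | exact K].
  - apply ex_series2_moment_term; [lia | exact Hx].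
  - apply (ex_series2_dominated _ (m_term pmf i 2 (/ (1 - c))) (m_term pmf j 2 (/ (1 - c)))); auto.
    + intros n0 n1. rewrite Rabs_pos_eq; [lra|]. apply Rmult_le_pos; apply m_term_nonneg.
    + apply m_term_nonneg.
Qed.

(* [t^2 S_0 - 2 t S_1 + S_2] sums the nonnegative terms [(t - ab)^2 kernel]. *)
Lemma moment_sum1_sq_le (x : R) : Rabs x < c -> 0 < mom 0 x ->
  mom 1 x ^ 2 <= mom 0 x * mom 2 x.
Proof.
  intros Hx H0. apply discriminant_le; [exact H0|]. intros t.
  pose proof (fun k (Hk : (k <= 4)%nat) => ex_series2_moment_term k x Hk Hx) as Ex.
  set (T := fun n0 n1 =>
    t ^ 2 * moment_term pmf i j 0 x n0 n1 + (- 2 * t) * moment_term pmf i j 1 x n0 n1).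
  assert (ET : ex_series2 T) by (apply ex_series2_lin; apply Ex; lia).
  replace (t ^ 2 * mom 0 x - 2 * t * mom 1 x + mom 2 x)
    with (Series2 (fun n0 n1 => 1 * T n0 n1 + 1 * moment_term pmf i j 2 x n0 n1)).
  2: { unfold mom, moment_sum. rewrite Series2_lin by (auto; apply Ex; lia).
       unfold T. rewrite Series2_lin by (apply Ex; lia). ring. }
  apply Series2_nonneg; [|apply ex_series2_lin; [exact ET | apply Ex; lia]].
  intros n0 n1. unfold T, moment_term.
  destruct (Q pmf i n0) as [a| |], (Q pmf j n1) as [b| |]; try lra.
  apply Rle_trans with ((t - a * b) ^ 2 * bvn_kernel x a b); [|right; ring].
  apply Rmult_le_pos; [apply pow2_ge_0 | left; apply exp_pos].
Qed.

Lemma moment_sum0_pos (x : R) : Rabs x < c -> 0 < mom 0 x.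
Proof.
  intros Hx. eapply Rlt_le_trans; [|apply moment_sum0_ge, Hx].
  pose proof PI_RGT_0. apply Rmult_lt_0_compat; [lra | apply Rmult_lt_0_compat; assumption].
Qed.

Lemma is_derive_z (x : R) : Rabs x < c -> is_derive (z pmf i j) x (- mom 1 x / mom 0 x ^ 2).
Proof.
  intros Hx. apply (is_derive_ext (fun t => / mom 0 t)).
  - intros t. symmetry. apply z_eq_inv_moment_sum0.
  - apply is_derive_inv.
    + apply is_derive_moment_sum; auto; lia.
    + pose proof (moment_sum0_pos x Hx). lra.
Qed.

Lemma is_derive_Derive_z (y : R) : Rabs y < c ->
  is_derive (Derive (z pmf i j)) y ((2 * mom 1 y ^ 2 - mom 0 y * mom 2 y) / mom 0 y ^ 3).
Proof.
  intros Hy. pose proof (moment_sum0_pos y Hy) as H0.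
  apply (is_derive_ext_loc (fun t => - mom 1 t / mom 0 t ^ 2)).
  - assert (Hd : 0 < c - Rabs y) by lra.
    exists (mkposreal _ Hd). intros t Ht. change (Rabs (t - y) < c - Rabs y) in Ht.
    assert (Htc : Rabs t < c).
    { replace t with (y + (t - y)) by ring. pose proof (Rabs_triang y (t - y)). lra. }
    symmetry. apply is_derive_unique, is_derive_z, Htc.
  - replace ((2 * mom 1 y ^ 2 - mom 0 y * mom 2 y) / mom 0 y ^ 3)
      with ((- mom 2 y * mom 0 y ^ 2 - - mom 1 y * (INR 2 * mom 1 y * mom 0 y ^ pred 2))
            / (mom 0 y ^ 2) ^ 2)
      by (simpl; field; lra).
    apply (is_derive_div (fun t => - mom 1 t) (fun t => mom 0 t ^ 2)).
    + apply (is_derive_opp (mom 1)). apply is_derive_moment_sum; auto.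
    + apply is_derive_pow. apply is_derive_moment_sum; auto.
    + apply pow_nonzero. lra.
Qed.

End MomentSums.

Lemma Rabs_second_derivative_inv_le (s0 s1 s2 : R) : 0 < s0 -> s1 ^ 2 <= s0 * s2 ->
  Rabs ((2 * s1 ^ 2 - s0 * s2) / s0 ^ 3) <= 3 * (s2 / s0 ^ 2).
Proof.
  intros H0 Hcs.
  assert (H3 : 0 < s0 ^ 3) by (apply pow_lt, H0).
  replace (3 * (s2 / s0 ^ 2)) with (3 * (s0 * s2) / s0 ^ 3) by (field; lra).
  unfold Rdiv. rewrite Rabs_mult, (Rabs_pos_eq (/ s0 ^ 3)) by (left; apply Rinv_0_lt_compat, H3).
  apply Rmult_le_compat_r; [left; apply Rinv_0_lt_compat, H3|].
  pose proof (pow2_ge_0 s1). apply Rabs_le. lra.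
Qed.

Lemma moment_ratio_le (q s0 s2 m0i m0j m2i m2j M : R) :
  1 <= q -> 0 < m0i -> 0 < m0j -> 0 <= m2i -> 0 <= m2j ->
  q * (m0i * m0j) <= s0 -> s2 <= q * (m2i * m2j) ->
  m2i ^ 2 / m0i ^ 4 <= M -> m2j ^ 2 / m0j ^ 4 <= M ->
  s2 / s0 ^ 2 <= M.
Proof.
  intros Hq Hi Hj Hi2 Hj2 H0 H2 Mi Mj.
  set (X := m2i / m0i ^ 2). set (Y := m2j / m0j ^ 2).
  assert (HX : 0 <= X) by (apply Rdiv_le_0_compat; [|apply pow_lt]; assumption).
  assert (HY : 0 <= Y) by (apply Rdiv_le_0_compat; [|apply pow_lt]; assumption).
  replace (m2i ^ 2 / m0i ^ 4) with (X ^ 2) in Mi by (unfold X; field; lra).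
  replace (m2j ^ 2 / m0j ^ 4) with (Y ^ 2) in Mj by (unfold Y; field; lra).
  assert (HXY : X * Y <= M) by (pose proof (pow2_ge_0 (X - Y)); nra).
  assert (Hp : 0 < q * (m0i * m0j))
    by (apply Rmult_lt_0_compat; [lra | apply Rmult_lt_0_compat; assumption]).
  destruct (Rle_dec s2 0) as [Hneg|Hpos].
  - assert (s2 / s0 ^ 2 <= 0)
      by (unfold Rdiv; rewrite <- pow_inv; pose proof (pow2_ge_0 (/ s0)); nra).
    nra.
  - apply Rle_trans with (q * (m2i * m2j) / (q * (m0i * m0j)) ^ 2).
    + unfold Rdiv.
      apply Rmult_le_compat; [lra | left; apply Rinv_0_lt_compat, pow_lt; lra | exact H2 |].
      apply Rinv_le_contravar; [apply pow_lt, Hp | apply pow_incr; lra].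
    + replace (q * (m2i * m2j) / (q * (m0i * m0j)) ^ 2) with (X * Y / q)
        by (unfold X, Y; field; lra).
      apply Rle_trans with (X * Y); [|exact HXY].
      unfold Rdiv. rewrite <- (Rmult_1_r (X * Y)) at 2.
      apply Rmult_le_compat_l; [nra|]. rewrite <- Rinv_1. apply Rinv_le_contravar; lra.
Qed.

Lemma max_over_ge (d : nat) (f : nat -> R) (l : nat) : (l < d)%nat -> f l <= max_over d f.
Proof.
  intros Hl. unfold max_over.
  assert (Hin : In (f l) (map f (seq 0 d))) by (apply in_map, in_seq; lia).
  revert Hin. generalize (map f (seq 0 d)) as L.
  induction L as [|a L IH]; simpl; [tauto|].
  intros [<-|Hin]; [apply Rmax_l | eapply Rle_trans; [apply IH, Hin | apply Rmax_r]].
Qed.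

Theorem mainTheorem11 :
  forall (d : nat) (pmf : nat -> nat -> R) (c : R),
    0 < c < 1 ->
    (forall i, (i < d)%nat -> is_pmf (pmf i)) ->
    (forall l, (l < d)%nat ->
        ex_series (m_term pmf l 2 (/ (1 - c))) /\
        ex_series (m_term pmf l 0 (1 - c)) /\
        0 < m pmf l 0 (1 - c)) ->
    forall (y : R), Rabs y < c ->
    forall (i j : nat), (i < d)%nat -> (j < d)%nat ->
      (forall y', Rabs y' < c -> ex_derive (z pmf i j) y') /\
      ex_derive_n (z pmf i j) 2 y /\
      Rabs (Derive_n (z pmf i j) 2 y)
        <= 3 * max_over d (fun l => (m pmf l 2 (/ (1 - c))) ^ 2 / (m pmf l 0 (1 - c)) ^ 4).
Proof.
  intros d pmf c Hc _ Hm y Hy i j Hi Hj.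
  destruct (Hm i Hi) as [Hi2 [Hi0 Hmi]], (Hm j Hj) as [Hj2 [Hj0 Hmj]].
  pose proof (is_derive_Derive_z pmf i j c Hc Hi2 Hi0 Hj2 Hj0 Hmi Hmj y Hy) as D2.
  split; [|split].
  - intros y' Hy'. eexists. exact (is_derive_z pmf i j c Hc Hi2 Hi0 Hj2 Hj0 Hmi Hmj y' Hy').
  - eexists. exact D2.
  - change (Derive_n (z pmf i j) 2 y) with (Derive (Derive (z pmf i j)) y).
    rewrite (is_derive_unique _ _ _ D2).
    pose proof (moment_sum0_pos pmf i j c Hc Hi2 Hi0 Hj2 Hj0 Hmi Hmj y Hy) as H0.
    eapply Rle_trans.
    { apply Rabs_second_derivative_inv_le; [exact H0|].
      apply (moment_sum1_sq_le pmf i j c); assumption. }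
    apply Rmult_le_compat_l; [lra|].
    pose proof PI2_3_2.
    apply (moment_ratio_le (2 * PI) _ _ (m pmf i 0 (1 - c)) (m pmf j 0 (1 - c))
             (m pmf i 2 (/ (1 - c))) (m pmf j 2 (/ (1 - c)))); try assumption; try lra.
    + apply m_nonneg, Hi2.
    + apply m_nonneg, Hj2.
    + apply (moment_sum0_ge pmf i j c); assumption.
    + apply (moment_sum2_le pmf i j c); assumption.
    + apply (max_over_ge d (fun l => m pmf l 2 (/ (1 - c)) ^ 2 / m pmf l 0 (1 - c) ^ 4)), Hi.
    + apply (max_over_ge d (fun l => m pmf l 2 (/ (1 - c)) ^ 2 / m pmf l 0 (1 - c) ^ 4)), Hj.
Qed.
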